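(* Let $G_{l_1+l_2}$ be the two-layer stochastic block model $G(n,n_1,n_2,p_1,p_2)$ satisfying the standing assumptions below, and let $e_{22}$ and $e_{2out}$ be the expected numbers of internal and outgoing edges of a community of the ground-truth layer $l_2$. If $3e_{22}>e_{2out}$, then for every partition $l'_2$ close to $l_2$, the (expected) modularity of $l_2$ in $G_{l_1+l_2}$ is strictly larger than that of $l'_2$, i.e. $Q_{l_2}>Q_{l'_2}$.
   Context: Multi-layer stochastic block model $G(n,n_1,\dots,n_L,p_1,\dots,p_L)$: a random graph on $n$ nodes with $L$ layers. For each layer $l$ the nodes are partitioned into $n_l$ planted communities of size $s_l=n/n_l$; independently for each layer, each pair of distinct nodes in a common community of layer $l$ receives an edge from layer $l$ with probability $p_l$; the graph is the simple union of all generated edges. The partitions of different layers are independent: for any $k\ge 2$ distinct layers and any choice of one community from each, their intersection has $n/(n_{l_1}\cdots n_{l_k})$ nodes (in expectation). Standing assumptions: $n_l\ge 4$, $p_l\in[0.05,1]$ for every layer, and $n\ge 2\prod_l n_l$. Modularity: for a partition of the nodes of a graph with $e$ edges, if community $i$ has $e^i_{in}$ internal edges, $e^i_{out}$ edges with exactly one endpoint in it, and total degree $d^i=2e^i_{in}+e^i_{out}$, the modularity is $Q=\sum_i\big(\frac{e^i_{in}}{e}-(\frac{d^i}{2e})^2\big)$; here all edge counts are replaced by their expected values in the model. Close partitions: a partition $l'$ is close to a partition $l$ if $l'$ is obtained from $l$ by one of: (1) moving one node from its community to another community; (2) exchanging the community memberships of two nodes; (3) separating one node from its community to form a new singleton community.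 *)

From HB Require Import structures.
From mathcomp Require Import all_boot all_order all_algebra.
Set Implicit Arguments. Unset Strict Implicit. Unset Printing Implicit Defensive.
Import Order.TTheory GRing.Theory Num.Theory.
Local Open Scope ring_scope.

(* Nodes of G(n, n1, n2, p1, p2) with n = n1 * n2 * m: a node is a triple
   (layer-1 community, layer-2 community, index inside the intersection). *)
Definition node (n1 n2 m : nat) : finType := ('I_n1 * 'I_n2 * 'I_m)%type.

Definition comm1 {n1 n2 m} (x : node n1 n2 m) : 'I_n1 := x.1.1.
Definition comm2 {n1 n2 m} (x : node n1 n2 m) : 'I_n2 := x.1.2.

Definition edge_prob {R : realFieldType} {n1 n2 m} (p1 p2 : R)
  (x y : node n1 n2 m) : R :=
  if x == y then 0
  else 1 - (1 - (comm1 x == comm1 y)%:R * p1) * (1 - (comm2 x == comm2 y)%:R * p2).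

Section Modularity.
Variables (R : realFieldType) (n1 n2 m : nat) (p1 p2 : R).
Local Notation V := (node n1 n2 m).
Local Notation w := (@edge_prob R n1 n2 m p1 p2).

Definition e_tot : R := (\sum_(x : V) \sum_(y : V) w x y) / 2.
Definition e_in (C : {set V}) : R := (\sum_(x in C) \sum_(y in C) w x y) / 2.
Definition e_out (C : {set V}) : R := \sum_(x in C) \sum_(y in ~: C) w x y.
Definition deg (C : {set V}) : R := 2 * e_in C + e_out C.

Definition modularity (P : {set {set V}}) : R :=
  \sum_(C in P) (e_in C / e_tot - (deg C / (2 * e_tot)) ^+ 2).
End Modularity.

Definition layer2_partition (n1 n2 m : nat) : {set {set node n1 n2 m}} :=
  [set [set x : node n1 n2 m | comm2 x == j] | j : 'I_n2].

Section Close.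
Variable T : finType.

Definition move_node (P : {set {set T}}) (v : T) (C : {set T}) : {set {set T}} :=
  ((P :\ pblock P v :\ C) :|: [set pblock P v :\ v; v |: C]) :\ set0.

Definition exchange_nodes (P : {set {set T}}) (u v : T) : {set {set T}} :=
  (P :\ pblock P u :\ pblock P v)
    :|: [set v |: (pblock P u :\ u); u |: (pblock P v :\ v)].

Definition separate_node (P : {set {set T}}) (v : T) : {set {set T}} :=
  (P :\ pblock P v) :|: [set pblock P v :\ v; [set v]].

Definition close_partition (P P' : {set {set T}}) : Prop :=
  (exists v C, C \in P /\ C != pblock P v /\ P' = move_node P v C)
  \/ (exists u v, pblock P u != pblock P v /\ P' = exchange_nodes P u v)
  \/ (exists v, pblock P v != [set v] /\ P' = separate_node P v).
End Close.

(* Every node x has the same expected weight w_own towards the rest of its layer-2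
   community and w_other towards any other layer-2 community, hence the same expected
   degree d.  The modularity of a partition P is thus (sum_(S in P) qscore S) / (N^2 d)
   with qscore S = 2 N e_in(S) - |S|^2 d.  The hypothesis 3 e_22 > e_2out reads
   (n2 - 1) w_other < 3/2 w_own, so w_other < w_own because n2 >= 4.  Hence moving a node
   lowers the total score by 2 N (w_own - w_other) + 2 d, exchanging two nodes by at least
   4 N (w_own - w_other), and separating a node by 2 N w_own - 2 (s - 1) d > 0, where s is
   the community size, N = n2 s and d <= n2 w_own. *)
From HB Require Import structures.
From mathcomp Require Import all_boot all_order all_algebra.
From mathcomp Require Import zify ring lra.

Set Implicit Arguments.
Unset Strict Implicit.
Unset Printing Implicit Defensive.
Import Order.TTheory GRing.Theory Num.Theory.
Local Open Scope ring_scope.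

Section BigSets.
Variables (M : nmodType) (T : finType) (F : {set T} -> M).

Lemma big_setD_set0 (A : {set {set T}}) :
  F set0 = 0 -> \sum_(S in A :\ set0) F S = \sum_(S in A) F S.
Proof.
move=> F0; have [A0 | A0] := boolP (set0 \in A).
  by rewrite [RHS](big_setD1 set0) //= F0 add0r.
by apply: eq_bigl => S; rewrite in_setD1; case: eqP => // ->; rewrite (negbTE A0).
Qed.

Lemma big_setU2 (A : {set {set T}}) (X Y : {set T}) :
  X \notin A -> Y \notin A -> X != Y ->
  \sum_(S in A :|: [set X; Y]) F S = F X + F Y + \sum_(S in A) F S.
Proof.
move=> XA YA XY; rewrite setUC -setUA big_setU1 /=; last first.
  by rewrite in_setU1 negb_or XY.
by rewrite big_setU1 //= addrA.
Qed.
End BigSets.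

Section BigReplace.
Variables (M : zmodType) (T : finType) (F : {set T} -> M).
Variables (A : {set {set T}}) (X Y : {set T}).
Hypotheses (XA : X \notin A) (YA : Y \notin A) (XY : X != Y).

Lemma big_replace1 (B : {set T}) : B \in A ->
  \sum_(S in (A :\ B) :|: [set X; Y]) F S = F X + F Y - F B + \sum_(S in A) F S.
Proof.
move=> BA; rewrite big_setU2 ?in_setD1 ?(negbTE XA) ?(negbTE YA) ?andbF //.
by rewrite [in RHS](big_setD1 B) //= addrA addrNK.
Qed.

Lemma big_replace2 (B C : {set T}) : B \in A -> C \in A -> B != C ->
  \sum_(S in (A :\ B :\ C) :|: [set X; Y]) F S
    = F X + F Y - (F B + F C) + \sum_(S in A) F S.
Proof.
move=> BA CA BC; have notin_sub Z : Z \notin A -> Z \notin A :\ B :\ C.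
  by move=> ZA; rewrite !in_setD1 (negbTE ZA) !andbF.
rewrite big_setU2 ?notin_sub // [in RHS](big_setD1 B) //= [in RHS](big_setD1 C) /=.
  by rewrite (addrA (F B)) addrA addrNK.
by rewrite in_setD1 eq_sym BC.
Qed.
End BigReplace.

Lemma sum_if_eq {M : nmodType} {T : finType} (t0 : T) (c d : M) :
  \sum_(t : T) (if t == t0 then c else d) = c + d *+ #|T|.-1.
Proof.
rewrite (bigD1 t0) //= eqxx -(cardC1 t0) -sumr_const; congr (_ + _).
by apply: eq_big => [t | t /negbTE ->]; rewrite ?inE.
Qed.

Definition block2 {n1 n2 m : nat} (j : 'I_n2) : {set node n1 n2 m} :=
  [set x | comm2 x == j].

Section NodeSums.
Variables (M : nmodType) (n1 n2 m : nat).
Local Notation V := (node n1 n2 m).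

Lemma sum_block2 (F : V -> M) (j : 'I_n2) :
  \sum_(x in block2 j :> {set V}) F x = \sum_(i : 'I_n1) \sum_(k : 'I_m) F ((i, j), k).
Proof.
transitivity (\sum_(ij : 'I_n1 * 'I_n2 | ij.2 == j) \sum_(k : 'I_m) F (ij, k)).
  by rewrite pair_big_dep; apply: eq_big => [[[i j'] k] | [[i j'] k] _]; rewrite ?inE ?andbT.
transitivity (\sum_i \sum_(j' | j' == j) \sum_k F ((i, j'), k)).
  by rewrite [RHS]pair_big_dep; apply: congr_big => // -[i jj].
by apply: eq_bigr => i _; rewrite big_pred1_eq.
Qed.
End NodeSums.

Lemma card_block2 (n1 n2 m : nat) (j : 'I_n2) :
  #|block2 j : {set node n1 n2 m}| = (n1 * m)%N.
Proof.
rewrite -sum1_card (@sum_block2 nat).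
by rewrite (eq_bigr (fun=> m)) => [|i _]; rewrite sum_nat_const card_ord ?muln1.
Qed.

Section Weights.
Variables (R : realFieldType) (n1 n2 m : nat) (p1 p2 : R).
Local Notation V := (node n1 n2 m).
Local Notation w := (@edge_prob R n1 n2 m p1 p2).

Definition wdeg (x : V) (S : {set V}) : R := \sum_(y in S) w x y.

(* The layer-2 community of x holds m - 1 other members of its layer-1 community
   (edge probability p1 + p2 - p1 p2) and (n1 - 1) m nodes outside it (probability p2);
   any other layer-2 community meets the layer-1 community of x in m nodes. *)
Definition w_own : R := (p1 + p2 - p1 * p2) *+ m.-1 + p2 *+ (n1.-1 * m).
Definition w_other : R := p1 *+ m.
Definition d_node : R := w_own + w_other *+ n2.-1.

Lemma edge_probC (x y : V) : w x y = w y x.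
Proof. by rewrite /edge_prob eq_sym [comm1 y == _]eq_sym [comm2 y == _]eq_sym. Qed.

Lemma edge_prob_xx (x : V) : w x x = 0.
Proof. by rewrite /edge_prob eqxx. Qed.

Lemma edge_prob_ge0 (x y : V) : 0 <= p1 -> p1 <= 1 -> 0 <= p2 -> p2 <= 1 -> 0 <= w x y.
Proof.
move=> ? ? ? ?; rewrite /edge_prob; case: (x == y) => //.
by case: (comm1 x == comm1 y); case: (comm2 x == comm2 y) => /=; nra.
Qed.

Lemma wdeg_block2_own (x : V) : wdeg x (block2 (comm2 x)) = w_own.
Proof.
case: x => [[i0 j0] k0]; rewrite /wdeg sum_block2 /comm2 /=.
have w_node i k : w ((i0, j0), k0) ((i, j0), k) =
    if i == i0 then (if k == k0 then 0 else p1 + p2 - p1 * p2) else p2.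
  rewrite /edge_prob /comm1 /comm2 /= !xpair_eqE !eqxx andbT [i0 == i]eq_sym [k0 == k]eq_sym.
  by case: (i == i0); case: (k == k0) => /=; ring.
under eq_bigr do under eq_bigr do rewrite w_node.
rewrite (eq_bigr (fun i => if i == i0 then (p1 + p2 - p1 * p2) *+ m.-1 else p2 *+ m)).
  by rewrite sum_if_eq card_ord -mulrnA mulnC.
move=> i _; case: eqP => _; last by rewrite sumr_const card_ord.
by rewrite sum_if_eq card_ord add0r.
Qed.

Lemma wdeg_block2_other (x : V) (j : 'I_n2) : j != comm2 x -> wdeg x (block2 j) = w_other.
Proof.
case: x => [[i0 j0] k0]; rewrite /wdeg sum_block2 /comm2 /= => ne.
have w_node i k : w ((i0, j0), k0) ((i, j), k) = if i == i0 then p1 else 0.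
  rewrite /edge_prob /comm1 /comm2 /= !xpair_eqE [j0 == j]eq_sym (negbTE ne) andbF /= eq_sym.
  by case: (i == i0) => /=; ring.
under eq_bigr do under eq_bigr do rewrite w_node.
rewrite (eq_bigr (fun i => if i == i0 then p1 *+ m else 0)) => [|i _].
  by rewrite sum_if_eq mul0rn addr0.
by case: eqP => _; rewrite sumr_const card_ord ?mul0rn.
Qed.

Lemma wdeg_block2 (x : V) (j : 'I_n2) :
  wdeg x (block2 j) = if j == comm2 x then w_own else w_other.
Proof. by case: eqP => [-> | /eqP]; [exact: wdeg_block2_own | exact: wdeg_block2_other]. Qed.

Lemma sum_edge_prob (x : V) : \sum_(y : V) w x y = d_node.
Proof.
rewrite (partition_big (fun y => comm2 y) predT) //=.
rewrite (eq_bigr (fun j => wdeg x (block2 j))) => [|j _]; last first.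
  by apply: eq_bigl => y; rewrite inE.
under eq_bigr do rewrite wdeg_block2.
by rewrite sum_if_eq card_ord.
Qed.

Lemma wdeg_setC (x : V) (S : {set V}) : wdeg x S + wdeg x (~: S) = d_node.
Proof.
rewrite /wdeg -(sum_edge_prob x) [RHS](bigID (mem S)) /=.
by congr (_ + _); apply: eq_bigl => y; rewrite inE.
Qed.

Lemma deg_card (S : {set V}) : deg p1 p2 S = #|S|%:R * d_node.
Proof.
rewrite /deg /e_in /e_out mulrC divfK ?pnatr_eq0 // -big_split /=.
rewrite (eq_bigr (fun=> d_node)) => [|x _]; last exact: wdeg_setC.
by rewrite sumr_const mulr_natl.
Qed.

Lemma e_tot_card : e_tot n1 n2 m p1 p2 = #|V|%:R * d_node / 2.
Proof.
rewrite /e_tot (eq_bigr (fun=> d_node)) => [|x _]; last exact: sum_edge_prob.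
by rewrite sumr_const mulr_natl.
Qed.

Lemma e_in_setU1 (S : {set V}) (v : V) :
  v \notin S -> e_in p1 p2 (v |: S) = e_in p1 p2 S + wdeg v S.
Proof.
move=> vS; rewrite /e_in big_setU1 //= big_setU1 //= edge_prob_xx add0r.
rewrite [X in _ + X](eq_bigr (fun x => w v x + \sum_(y in S) w x y)) => [|x _].
  by rewrite big_split /= /wdeg; field.
by rewrite big_setU1 //= edge_probC.
Qed.

Lemma e_in_setD1 (S : {set V}) (v : V) :
  v \in S -> e_in p1 p2 (S :\ v) = e_in p1 p2 S - wdeg v S.
Proof.
move=> vS; have := @e_in_setU1 (S :\ v) v; rewrite setD11 setD1K // => -> //.
by rewrite /wdeg (big_setD1 v vS) /= edge_prob_xx add0r addrK.
Qed.

Lemma wdeg_setD1 (x y : V) (S : {set V}) :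
  y \in S -> wdeg x (S :\ y) = wdeg x S - w x y.
Proof. by move=> yS; rewrite /wdeg [X in _ = X - _](big_setD1 y yS) /= addrC addrK. Qed.

Lemma e_in_set1 (v : V) : e_in p1 p2 [set v] = 0.
Proof. by rewrite /e_in !big_set1 edge_prob_xx mul0r. Qed.

Lemma e_in_set0 : e_in p1 p2 (set0 : {set V}) = 0.
Proof. by rewrite /e_in big_set0 mul0r. Qed.

Lemma e_in_block2 (j : 'I_n2) :
  e_in p1 p2 (block2 j : {set V}) = (n1 * m)%:R * w_own / 2.
Proof.
rewrite /e_in (eq_bigr (fun=> w_own)) => [|x]; last first.
  by rewrite inE => /eqP <-; apply: wdeg_block2_own.
by rewrite sumr_const card_block2 mulr_natl.
Qed.

Lemma e_out_block2 (j : 'I_n2) :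
  e_out p1 p2 (block2 j : {set V}) = (n1 * m)%:R * (w_other *+ n2.-1).
Proof.
rewrite /e_out (eq_bigr (fun=> w_other *+ n2.-1)) => [|x]; last first.
  rewrite inE => /eqP <-; apply: (@addrI _ (wdeg x (block2 (comm2 x)))).
  by rewrite -/(wdeg x _) wdeg_setC wdeg_block2_own.
by rewrite sumr_const card_block2 mulr_natl.
Qed.

Lemma w_other_lt_own (j : 'I_n2) :
  (4 <= n2)%N -> (0 < n1 * m)%N -> 0 <= p1 ->
  e_out p1 p2 (block2 j : {set V}) < 3 * e_in p1 p2 (block2 j : {set V}) ->
  w_other < w_own.
Proof.
move=> n2_ge4 s_gt0 p1_ge0; rewrite e_out_block2 e_in_block2.
have -> : 3 * ((n1 * m)%:R * w_own / 2) = (n1 * m)%:R * (3 * w_own / 2) by ring.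
rewrite ltr_pM2l ?ltr0n //.
have w_other_ge0 : 0 <= w_other by rewrite mulrn_wge0.
have : 3 * w_other <= w_other *+ n2.-1.
  by rewrite -[w_other *+ _]mulr_natl ler_wpM2r // (ler_nat _ 3); lia.
lra.
Qed.

End Weights.

Section Layer2Partition.
Variables n1 n2 m : nat.
Local Notation V := (node n1 n2 m).
Local Notation P0 := (layer2_partition n1 n2 m).

Lemma block2_in (j : 'I_n2) : block2 j \in P0.
Proof. exact: imset_f. Qed.

Lemma layer2_blockE (S : {set V}) (y : V) :
  S \in P0 -> y \in S -> S = block2 (comm2 y).
Proof. by case/imsetP => j _ ->; rewrite inE => /eqP ->. Qed.

Lemma pblock_layer2 (x : V) : pblock P0 x = block2 (comm2 x).
Proof.
rewrite /pblock; case: pickP => [B /andP[BP xB] | none] /=; first exact: layer2_blockE.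
by have := none (block2 (comm2 x)); rewrite /= block2_in inE eqxx.
Qed.

Lemma card_layer2 (S : {set V}) : S \in P0 -> #|S| = (n1 * m)%N.
Proof. by case/imsetP => j _ ->; apply: card_block2. Qed.

Lemma layer2_notin_mixed (S : {set V}) (y z : V) :
  y \in S -> z \in S -> comm2 y != comm2 z -> S \notin P0.
Proof.
move=> yS zS yz; apply/negP => SP; move: zS.
by rewrite (layer2_blockE SP yS) inE eq_sym (negbTE yz).
Qed.

Lemma layer2_notin_setD1 (v : V) : block2 (comm2 v) :\ v \notin P0.
Proof.
apply/negP => /card_layer2; have := cardsD1 v (block2 (comm2 v)).
by rewrite inE eqxx card_block2; lia.
Qed.

Hypothesis blocks_ge2 : (2 <= n1 * m)%N.

Lemma layer2_notin_set1 (v : V) : [set v] \notin P0.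
Proof. by apply/negP => /card_layer2; rewrite cards1; lia. Qed.

Lemma layer2_notin_exchange (u v : V) :
  comm2 u != comm2 v -> v |: (block2 (comm2 u) :\ u) \notin P0.
Proof.
move=> uv; have : block2 (comm2 u) :\ u != set0.
  rewrite -card_gt0; have := cardsD1 u (block2 (comm2 u)).
  by rewrite inE eqxx card_block2; lia.
case/set0Pn=> y yBu; apply: (layer2_notin_mixed (setU11 v _) (setU1r v yBu)).
by move: yBu; rewrite !inE eq_sym => /andP[_ /eqP ->]; rewrite eq_sym.
Qed.
End Layer2Partition.

Section CloseComparisons.
Variables (R : realFieldType) (n1 n2 m : nat) (p1 p2 : R).
Local Notation V := (node n1 n2 m).
Local Notation P0 := (layer2_partition n1 n2 m).
Local Notation w := (@edge_prob R n1 n2 m p1 p2).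
Local Notation wdeg := (@wdeg R n1 n2 m p1 p2).
Local Notation a := (w_own n1 m p1 p2).
Local Notation b := (w_other m p1).
Local Notation d := (d_node n1 n2 m p1 p2).
Local Notation N := (#|V|%:R : R).

Definition qscore (S : {set V}) : R := 2 * N * e_in p1 p2 S - #|S|%:R ^+ 2 * d.

Lemma qscore_set0 : qscore set0 = 0.
Proof. by rewrite /qscore e_in_set0 cards0; ring. Qed.

Lemma qscore_set1 (v : V) : qscore [set v] = - d.
Proof. by rewrite /qscore e_in_set1 cards1; ring. Qed.

Lemma qscore_setU1 (S : {set V}) (v : V) : v \notin S ->
  qscore (v |: S) = qscore S + 2 * N * wdeg v S - (2 * #|S|%:R + 1) * d.
Proof. by move=> vS; rewrite /qscore e_in_setU1 // cardsU1 vS add1n -natr1; ring. Qed.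

Lemma qscore_setD1 (S : {set V}) (v : V) : v \in S ->
  qscore (S :\ v) = qscore S - 2 * N * wdeg v S + (2 * #|S|%:R - 1) * d.
Proof. by move=> vS; rewrite /qscore e_in_setD1 // [#|S|](cardsD1 v) vS add1n -natr1; ring. Qed.

Hypotheses (p1_ge0 : 0 <= p1) (p1_le1 : p1 <= 1) (p2_ge0 : 0 <= p2) (p2_le1 : p2 <= 1).
Hypotheses (n2_gt0 : (0 < n2)%N) (blocks_ge2 : (2 <= n1 * m)%N).
Hypothesis own_gt_other : b < a.

Lemma card_nodeE : N = n2%:R * (n1 * m)%:R.
Proof. by rewrite !card_prod !card_ord -natrM mulnAC mulnC. Qed.

Lemma card_node_gt0 : 0 < N.
Proof. by rewrite card_nodeE mulr_gt0 ?ltr0n //; lia. Qed.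

Lemma w_other_ge0 : 0 <= b.
Proof. exact: mulrn_wge0. Qed.

Lemma d_node_gt0 : 0 < d.
Proof.
have := own_gt_other; have := w_other_ge0; have := mulrn_wge0 n2.-1 w_other_ge0.
by rewrite /d_node; lra.
Qed.

Lemma d_node_le : d <= n2%:R * a.
Proof.
rewrite /d_node -[n2 in X in _ <= X](prednK n2_gt0) mulr_natl mulrS lerD2l lerMn2r.
by rewrite (ltW own_gt_other) orbT.
Qed.

Lemma modularityE (P : {set {set V}}) :
  modularity p1 p2 P = (\sum_(S in P) qscore S) / (N ^+ 2 * d).
Proof.
rewrite /modularity mulr_suml; apply: eq_bigr => S _.
rewrite deg_card e_tot_card /qscore; field.
by rewrite !gt_eqF ?card_node_gt0 ?d_node_gt0.
Qed.

Lemma modularity_ltE (P P' : {set {set V}}) :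
  (modularity p1 p2 P' < modularity p1 p2 P) =
  (\sum_(S in P') qscore S < \sum_(S in P) qscore S).
Proof.
by rewrite !modularityE ltr_pM2r // invr_gt0 mulr_gt0 ?exprn_gt0 ?card_node_gt0 ?d_node_gt0.
Qed.

Lemma card_block2D1 (x : V) : #|block2 (comm2 x) :\ x|%:R = (n1 * m)%:R - 1 :> R.
Proof.
have := cardsD1 x (block2 (comm2 x)).
by rewrite inE eqxx card_block2 => ->; rewrite add1n -natr1 addrK.
Qed.

Lemma modularity_move (v : V) (C : {set V}) :
  C \in P0 -> C != pblock P0 v ->
  modularity p1 p2 (move_node P0 v C) < modularity p1 p2 P0.
Proof.
rewrite /move_node !pblock_layer2 => /imsetP[j _ ->]; rewrite -/(block2 j) => Cv.
have jv : j != comm2 v by apply: contraNneq Cv => ->.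
have vC : v \notin block2 j by rewrite inE eq_sym.
rewrite modularity_ltE big_setD_set0 ?qscore_set0 // big_replace2 ?block2_in ?layer2_notin_setD1 //.
- rewrite qscore_setD1 ?inE // qscore_setU1 // !card_block2 !wdeg_block2 eqxx (negbTE jv).
  have := d_node_gt0; have : 0 < N * (a - b) by rewrite mulr_gt0 ?card_node_gt0 ?subr_gt0.
  lra.
- apply: (@layer2_notin_mixed _ _ _ _ v ((v.1.1, j), v.2)); first exact: setU11.
    by rewrite setU1r // inE.
  by rewrite eq_sym.
- by apply/eqP => E; move: (setU11 v (block2 j)); rewrite -E setD11.
- by rewrite eq_sym.
Qed.

Lemma modularity_exchange (u v : V) :
  pblock P0 u != pblock P0 v ->
  modularity p1 p2 (exchange_nodes P0 u v) < modularity p1 p2 P0.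
Proof.
rewrite /exchange_nodes !pblock_layer2 => Buv.
have uv : comm2 u != comm2 v by apply: contraNneq Buv => ->.
have vBu : v \notin block2 (comm2 u) :\ u by rewrite !inE [comm2 v == _]eq_sym (negbTE uv) andbF.
have uBv : u \notin block2 (comm2 v) :\ v by rewrite !inE (negbTE uv) andbF.
rewrite modularity_ltE big_replace2 ?block2_in //.
- rewrite !qscore_setU1 // !qscore_setD1 ?inE // !wdeg_setD1 ?inE //.
  rewrite !card_block2D1 !card_block2 !wdeg_block2 !eqxx [comm2 v == comm2 u]eq_sym (negbTE uv).
  have := d_node_gt0; have : 0 < N * (a - b) by rewrite mulr_gt0 ?card_node_gt0 ?subr_gt0.
  have w_ge0 x y : 0 <= N * w x y.
    by rewrite mulr_ge0 ?(ltW card_node_gt0) ?edge_prob_ge0.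
  have := w_ge0 u v; have := w_ge0 v u.
  lra.
- exact: layer2_notin_exchange.
- by apply: layer2_notin_exchange => //; rewrite eq_sym.
- apply/eqP => E; have := setU11 u (block2 (comm2 v) :\ v).
  by rewrite -E in_setU1 setD11 orbF => /eqP uv'; rewrite uv' eqxx in uv.
Qed.

Lemma modularity_separate (v : V) :
  modularity p1 p2 (separate_node P0 v) < modularity p1 p2 P0.
Proof.
rewrite /separate_node pblock_layer2 modularity_ltE big_replace1 ?block2_in //.
- rewrite qscore_setD1 ?inE // qscore_set1 card_block2 wdeg_block2 eqxx.
  have : (n1 * m)%:R * d <= N * a.
    by rewrite card_nodeE mulrAC [_ * d]mulrC ler_wpM2r ?ler0n ?d_node_le.
  have := d_node_gt0; lra.
- exact: layer2_notin_setD1.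
- exact: layer2_notin_set1.
- by apply/eqP => E; have := set11 v; rewrite -E setD11.
Qed.

End CloseComparisons.

Theorem theorem10 (R : realFieldType) (n1 n2 m : nat) (p1 p2 : R) :
  (4 <= n1)%N -> (4 <= n2)%N ->
  (* n >= 2 n1 n2 with n = n1 * n2 * m *)
  (2 <= m)%N ->
  1 / 20 <= p1 -> p1 <= 1 ->
  1 / 20 <= p2 -> p2 <= 1 ->
  (* 3 e_22 > e_2out for the communities of layer l2 *)
  (forall C, C \in layer2_partition n1 n2 m ->
     e_out p1 p2 C < 3 * e_in p1 p2 C) ->
  forall P' : {set {set node n1 n2 m}},
    close_partition (layer2_partition n1 n2 m) P' ->
    modularity p1 p2 P' < modularity p1 p2 (layer2_partition n1 n2 m).
Proof.
move=> n1_ge4 n2_ge4 m_ge2 p1_lb p1_le1 p2_lb p2_le1 dense P' close.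
have p1_ge0 : 0 <= p1 by lra.
have p2_ge0 : 0 <= p2 by lra.
have n2_gt0 : (0 < n2)%N by lia.
have blocks_ge2 : (2 <= n1 * m)%N by nia.
have own_gt_other : w_other m p1 < w_own n1 m p1 p2.
  apply: (@w_other_lt_own _ n1 n2 m p1 p2 (Ordinal n2_gt0)) => //; first by lia.
  exact/dense/block2_in.
case: close => [[v [C [CP [CB ->]]]] | [[u [v [uv ->]]] | [v [_ ->]]]].
- exact: modularity_move.
- exact: modularity_exchange.
- exact: modularity_separate.
Qed.
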